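(* Let $\Gamma$ be a countably infinite group acting minimally and continuously on a compact metrizable space $X$ with more than one orbit, let $x_1\in X$ have trivial stabilizer, and let $f:X\setminus\{x_1\}\to\{1,-1\}$ be continuous and not continuously extendable to $X$. Let $\pi_f:X_f\to X$ be the McMahon extension with continuous $\tilde f:X_f\to\{1,-1\}$, and put $X_{f,\pm}=\tilde f^{-1}(\pm1)$ and $X_\pm=f^{-1}(\pm1)$. Then $(X_{f,+},X_{f,-})$ has arbitrarily large finite independence sets if and only if $(X_+,X_-)$ has arbitrarily large finite independence sets.
   Context: McMahon extension: $\Gamma\curvearrowright X_f$ is a minimal continuous action on a compact metrizable space with a $\Gamma$-equivariant continuous surjection $\pi_f:X_f\to X$ such that $\pi_f^{-1}(x)$ is a single point for $x\notin\Gamma x_1$ and two points for $x\in\Gamma x_1$, and $\tilde f$ is the continuous extension to $X_f$ of $f\circ\pi_f$ on $X_f\setminus\pi_f^{-1}(x_1)$ (unique up to conjugacy). A set $M\subseteq\Gamma$ is an independence set for $(A_1,A_2)$ if $\bigcap_{s\in F}s^{-1}A_{\omega(s)}\ne\emptyset$ for every nonempty finite $F\subseteq M$ and every $\omega\in\{1,2\}^F$. *)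

From HB Require Import structures.
From mathcomp Require Import all_boot all_order all_algebra.
From mathcomp Require Import all_classical all_reals all_analysis.
Set Implicit Arguments. Unset Strict Implicit. Unset Printing Implicit Defensive.
Import Order.TTheory GRing.Theory Num.Theory.
Local Open Scope classical_set_scope.

Section Defs.
Variables (G : groupType).

Definition is_action (X : Type) (act : G -> X -> X) :=
  (forall x, act 1%g x = x) /\ (forall g h x, act (g * h)%g x = act g (act h x)).

Definition cont_action (X : topologicalType) (act : G -> X -> X) :=
  is_action act /\ forall g, continuous (act g).

Definition gorbit (X : Type) (act : G -> X -> X) (x : X) : set X :=
  [set act g x | g in [set: G]].

Definition minimal_action (X : topologicalType) (act : G -> X -> X) :=
  forall x, closure (gorbit act x) = [set: X].

Definition trivial_stabilizer (X : Type) (act : G -> X -> X) (x : X) :=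
  forall g, act g x = x -> g = 1%g.

(* M is an independence set for (A1, A2): for every nonempty finite F ⊆ M and
   every ω : F -> {1,2} (here encoded as w : G -> bool, true ↦ 1, false ↦ 2),
   ⋂_{s ∈ F} s^{-1} A_{ω(s)} ≠ ∅, where x ∈ s^{-1} A iff s·x ∈ A. *)
Definition independence_set (X : Type) (act : G -> X -> X) (A1 A2 : set X)
    (M : set G) :=
  forall F : set G, finite_set F -> F !=set0 -> F `<=` M ->
  forall w : G -> bool,
  exists x : X, forall s, F s -> (if w s then A1 else A2) (act s x).

Definition arb_large_indep (X : Type) (act : G -> X -> X) (A1 A2 : set X) :=
  forall n : nat, exists M : set G,
    [/\ finite_set M, independence_set act A1 A2 M &
        exists h : 'I_n -> G, injective h /\ range h `<=` M].

(* (Xf, actf, pif, ft) is a McMahon extension of (X, act) for x1 and f :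
   X \ {x1} -> {1,-1} (f encoded as f : X -> bool, true ↦ 1, false ↦ -1;
   its value at x1 is irrelevant). *)
Definition McMahon_extension (X Xf : topologicalType) (act : G -> X -> X)
    (x1 : X) (f : X -> bool)
    (actf : G -> Xf -> Xf) (pif : Xf -> X) (ft : Xf -> bool) :=
  [/\ cont_action actf /\ minimal_action actf,
      continuous pif /\ (forall x, exists y, pif y = x),
      (forall g y, pif (actf g y) = act g (pif y)),
      (forall x, ~ gorbit act x1 x -> exists y, pif @^-1` [set x] = [set y]) /\
      (forall x, gorbit act x1 x ->
         exists y1 y2, y1 <> y2 /\ pif @^-1` [set x] = [set y1; y2]) &
      continuous ft /\ (forall y, pif y <> x1 -> ft y = f (pif y))].

End Defs.

From HB Require Import structures.
From mathcomp Require Import all_boot all_order all_algebra.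
From mathcomp Require Import all_classical all_reals all_analysis.
Set Implicit Arguments. Unset Strict Implicit. Unset Printing Implicit Defensive.
Local Open Scope classical_set_scope.

(* The two pairs have the same independence sets.  A witness in X of a pattern
   avoids x1 along the relevant translates, where ft = f \o pif, so any lift
   of it is a witness in Xf.  Conversely, the witnesses in Xf of a finite
   pattern form an open set because ft is continuous, so by minimality of Xf
   one of them lies over the orbit of a point whose orbit misses x1; its image
   is then a witness in X. *)

Lemma filter_forall_finite_set (T I : Type) (F : set_system T) (D : set I)
    (P : I -> set T) :
  Filter F -> finite_set D -> (forall i, D i -> F (P i)) ->
  F [set x | forall i, D i -> P i x].
Proof.
move=> FF /(@finite_fsetP {classic I}) [E ->] FP.
exact: (@filter_bigI T {classic I} E P F FF FP).
Qed.

Lemma closureT_dense (T : topologicalType) (A : set T) :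
  closure A = [set: T] -> dense A.
Proof.
move=> clA U [x Ux] oU.
have : closure A x by rewrite clA.
by move=> /(_ U (open_nbhs_nbhs (conj oU Ux))); rewrite setIC.
Qed.

Section Actions.
Variables (G : groupType) (X : topologicalType) (act : G -> X -> X).

Definition indep_witness (A1 A2 : set X) (F : set G) (w : G -> bool) : set X :=
  [set x | forall s, F s -> (if w s then A1 else A2) (act s x)].

Lemma open_indep_witness (A1 A2 : set X) (F : set G) (w : G -> bool) :
  (forall g, continuous (act g)) -> open A1 -> open A2 -> finite_set F ->
  open (indep_witness A1 A2 F w).
Proof.
move=> act_cont oA1 oA2 finF; rewrite openE => x xW.
apply: filter_forall_finite_set finF _ => s Fs.
have oA : open (if w s then A1 else A2) by case: (w s).
exact: act_cont (open_nbhs_nbhs (conj oA (xW s Fs))).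
Qed.

Lemma minimal_orbit_meets_open (U : set X) :
  minimal_action act -> open U -> U !=set0 -> forall x, exists g, U (act g x).
Proof.
move=> minact oU U0 x.
have [y [Uy [g _ gxy]]] := closureT_dense (minact x) U0 oU.
by exists g; rewrite gxy.
Qed.

Hypothesis actP : is_action act.

Lemma act_neq_of_notin_gorbit (x y : X) :
  ~ gorbit act x y -> forall g, act g y <> x.
Proof.
have [act1 actM] := actP; move=> xy g gyx; apply: xy; exists g^-1%g => //.
by rewrite -gyx -actM mulVg act1.
Qed.

Lemma exists_notin_gorbit :
  (exists x y : X, ~ gorbit act x y) -> forall x, exists y, ~ gorbit act x y.
Proof.
case=> x [y xy] z; have [[g _ gzy]|zy] := pselect (gorbit act z y); last first.
  by exists y.
exists x => -[h _ hzx]; apply: xy; exists (g * h^-1)%g => //.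
have [act1 actM] := actP.
by rewrite -gzy -hzx -actM -mulgA mulVg mulg1.
Qed.

End Actions.

Lemma arb_large_indep_eq (G : groupType) (X Y : Type)
    (actX : G -> X -> X) (actY : G -> Y -> Y) (A1 A2 : set X) (B1 B2 : set Y) :
  (forall M, independence_set actX A1 A2 M <-> independence_set actY B1 B2 M) ->
  arb_large_indep actX A1 A2 <-> arb_large_indep actY B1 B2.
Proof.
move=> indepE; split=> large n; have [M [finM /indepE indepM bigM]] := large n;
  by exists M.
Qed.

Section McMahonIndependence.
Variables (G : groupType) (X Xf : topologicalType).
Variables (act : G -> X -> X) (actf : G -> Xf -> Xf).
Variables (x1 : X) (f : X -> bool) (pif : Xf -> X) (ft : Xf -> bool).
Hypothesis pif_equiv : forall g y, pif (actf g y) = act g (pif y).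
Hypothesis ft_f : forall y, pif y <> x1 -> ft y = f (pif y).

Local Notation Xf_plus := (ft @^-1` [set true]) (only parsing).
Local Notation Xf_minus := (ft @^-1` [set false]) (only parsing).
Local Notation X_plus := [set x | x <> x1 /\ f x = true] (only parsing).
Local Notation X_minus := [set x | x <> x1 /\ f x = false] (only parsing).

Lemma indep_witness_pif (F : set G) (w : G -> bool) (y : Xf) :
  (forall s, F s -> act s (pif y) <> x1) ->
  indep_witness actf Xf_plus Xf_minus F w y <->
  indep_witness act X_plus X_minus F w (pif y).
Proof.
move=> avoid_x1; split=> yW s Fs; have := yW s Fs; have := avoid_x1 s Fs;
  rewrite -pif_equiv => sy; case: (w s); rewrite /preimage /= ft_f //; by case.
Qed.

Lemma independence_set_lift (M : set G) :
  (forall x, exists y, pif y = x) ->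
  independence_set act X_plus X_minus M ->
  independence_set actf Xf_plus Xf_minus M.
Proof.
move=> pif_surj indepM F finF F0 FM w.
have [x xW] := indepM F finF F0 FM w.
have [y yx] := pif_surj x.
exists y; apply/indep_witness_pif; rewrite yx // => s Fs.
by have := xW s Fs; case: (w s) => -[].
Qed.

Lemma independence_set_descend (M : set G) :
  cont_action actf -> minimal_action actf -> continuous ft ->
  (forall x, exists y, pif y = x) ->
  is_action act -> (exists z, ~ gorbit act x1 z) ->
  independence_set actf Xf_plus Xf_minus M ->
  independence_set act X_plus X_minus M.
Proof.
move=> [_ actf_cont] actf_min ft_cont pif_surj actP [z x1z] indepM.
move=> F finF F0 FM w.
have [y yW] := indepM F finF F0 FM w.
have [z' pz'] := pif_surj z.
have oW : open (indep_witness actf Xf_plus Xf_minus F w).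
  apply: open_indep_witness => //; apply: open_comp (discrete_open _) => ? _;
    exact: ft_cont.
have [g gW] := minimal_orbit_meets_open actf_min oW (ex_intro _ y yW) z'.
exists (pif (actf g z')); apply/indep_witness_pif => // s _.
rewrite pif_equiv pz' -(proj2 actP); exact: act_neq_of_notin_gorbit.
Qed.

End McMahonIndependence.

Theorem lemma3p3 (R : realType) (G : groupType) (X : metricType R)
  (act : G -> X -> X) (x1 : X) (f : X -> bool)
  (HGcount : countable [set: G]) (HGinf : infinite_set [set: G])
  (HXcpt : compact [set: X])
  (Hact : cont_action act) (Hmin : minimal_action act)
  (Horbits : exists x y : X, ~ gorbit act x y)
  (Hstab : trivial_stabilizer act x1)
  (Hfcont : {within ~` [set x1], continuous f})
  (Hfnoext : ~ exists g : X -> bool,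
                 continuous g /\ (forall x, x <> x1 -> g x = f x))
  (Xf : metricType R) (HXfcpt : compact [set: Xf])
  (actf : G -> Xf -> Xf) (pif : Xf -> X) (ft : Xf -> bool)
  (HMc : McMahon_extension act x1 f actf pif ft) :
  arb_large_indep actf (ft @^-1` [set true]) (ft @^-1` [set false]) <->
  arb_large_indep act [set x | x <> x1 /\ f x = true]
                      [set x | x <> x1 /\ f x = false].
Proof.
have [[actf_cont actf_min] [_ pif_surj] pif_equiv _ [ft_cont ft_f]] := HMc.
have [act_action _] := Hact.
have x1_orbit_proper := exists_notin_gorbit act_action Horbits x1.
apply: arb_large_indep_eq => M; split.
- exact: independence_set_descend.
- exact: independence_set_lift.
Qed.
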